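(* Every orthogonal, left-finite TRS is infinitarily normalising: for each orthogonal, left-finite TRS $\mathcal{R}$ and each partial term $t$ in $\mathcal{R}$, there is an $\mathcal{R}$-normal form that is strongly $p$-reachable from $t$.
   Context: Orthogonal = left-linear and non-overlapping; left-finite = all left-hand sides finite. Partial terms are terms over $\Sigma_\bot=\Sigma\uplus\{\bot\}$, ordered by $\le_\bot$ ($s\le_\bot t$ iff $s$ is $t$ with some subterms replaced by $\bot$), a complete semilattice; $\liminf_{\iota\to\alpha}a_\iota=\bigvee_{\beta<\alpha}\bigwedge_{\beta\le\iota<\alpha}a_\iota$. A reduction $(t_\iota\to_{\pi_\iota}t_{\iota+1})_{\iota<\alpha}$ with contexts $c_\iota$ ($t_\iota$ with position $\pi_\iota$ replaced by $\bot$) strongly $p$-converges to $t$ if $\liminf_{\iota\to\lambda}c_\iota=t_\lambda$ for all limit $\lambda<\alpha$, and $t$ is the last term (closed case) or $t=\liminf_{\iota\to\alpha}c_\iota$ (open case); $t$ is strongly $p$-reachable from $s$ if such a reduction from $s$ to $t$ exists. *)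

From mathcomp Require Import all_boot.
Set Implicit Arguments. Unset Strict Implicit. Unset Printing Implicit Defensive.

Section Terms.
Variables (F V : Type) (arity : F -> nat).

Inductive label := Fun of F | Var of V | Bot.

(* A (possibly infinite) partial term is a labelling of a tree domain of
   positions (sequences of naturals); None = position not in the term. *)
Definition pterm := seq nat -> option label.

Definition wf_term (t : pterm) : Prop :=
  [/\ t [::] <> None,
      (forall p i, t (rcons p i) <> None ->
         exists2 f, t p = Some (Fun f) & i < arity f)
    & (forall p f i, t p = Some (Fun f) -> i < arity f -> t (rcons p i) <> None)].

Definition total (t : pterm) : Prop := forall p, t p <> Some Bot.
Definition finite_term (t : pterm) : Prop :=
  exists n, forall p, n < size p -> t p = None.

Definition bot_term : pterm := fun p => if p is [::] then Some Bot else None.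

Definition subterm (t : pterm) (pi : seq nat) : pterm := fun p => t (pi ++ p).

Definition replace (t : pterm) (pi : seq nat) (s : pterm) : pterm :=
  fun p => if prefix pi p then s (drop (size pi) p) else t p.

(* application of a substitution: walk the position, switching to sigma x
   at the first variable occurrence met along the way *)
Fixpoint subst_aux (sigma : V -> pterm) (t : pterm) (q p : seq nat)
  : option label :=
  match t q with
  | Some (Var x) => sigma x p
  | _ => match p with
         | [::] => t q
         | i :: p' => subst_aux sigma t (rcons q i) p'
         end
  end.
Definition subst (sigma : V -> pterm) (t : pterm) : pterm :=
  fun p => subst_aux sigma t [::] p.

Definition wf_subst (sigma : V -> pterm) : Prop := forall x, wf_term (sigma x).

Definition vars (t : pterm) (x : V) : Prop := exists p, t p = Some (Var x).

Definition trs := pterm -> pterm -> Prop.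

Definition is_TRS (R : trs) : Prop :=
  forall l r, R l r ->
    [/\ wf_term l /\ wf_term r, total l, total r,
        (forall x, l [::] <> Some (Var x))
      & (forall x, vars r x -> vars l x)].

Definition left_finite (R : trs) : Prop := forall l r, R l r -> finite_term l.

Definition left_linear (R : trs) : Prop :=
  forall l r, R l r -> forall p q x,
    l p = Some (Var x) -> l q = Some (Var x) -> p = q.

(* non-overlapping: a non-variable subterm of a lhs l1 at pi is unifiable with
   a (renamed-apart) lhs l2 only if pi is the root and the rules coincide *)
Definition non_overlapping (R : trs) : Prop :=
  forall l1 r1 l2 r2 pi f (s1 s2 : V -> pterm),
    R l1 r1 -> R l2 r2 -> l1 pi = Some (Fun f) ->
    (forall x, wf_term (s1 x) /\ total (s1 x)) ->
    (forall x, wf_term (s2 x) /\ total (s2 x)) ->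
    subst s1 (subterm l1 pi) = subst s2 l2 ->
    [/\ pi = [::], l1 = l2 & r1 = r2].

Definition orthogonal (R : trs) : Prop := left_linear R /\ non_overlapping R.

Definition step (R : trs) (t : pterm) (pi : seq nat) (t' : pterm) : Prop :=
  exists l r sigma, [/\ R l r, wf_subst sigma,
    subterm t pi = subst sigma l & t' = replace t pi (subst sigma r)].

Definition normal_form (R : trs) (t : pterm) : Prop :=
  ~ exists pi l r sigma, [/\ R l r, wf_subst sigma & subterm t pi = subst sigma l].

Definition le_bot (s t : pterm) : Prop :=
  forall p, s p <> None -> s p = Some Bot \/ s p = t p.

Definition is_glb (S : pterm -> Prop) (g : pterm) : Prop :=
  [/\ wf_term g, (forall u, S u -> le_bot g u)
    & (forall h, wf_term h -> (forall u, S u -> le_bot h u) -> le_bot h g)].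
Definition is_lub (S : pterm -> Prop) (g : pterm) : Prop :=
  [/\ wf_term g, (forall u, S u -> le_bot u g)
    & (forall h, wf_term h -> (forall u, S u -> le_bot u h) -> le_bot g h)].

(* The ordinal alpha is represented by a well-ordered
   type W (its elements are the indices iota < alpha of the steps); the
   positions iota <= alpha are option W, with None standing for alpha. *)
Section Reduction.
Variables (W : Type) (lt : W -> W -> Prop).

Definition well_order : Prop :=
  [/\ well_founded lt, (forall a b c, lt a b -> lt b c -> lt a c)
    & (forall a b, lt a b \/ a = b \/ lt b a)].

Definition ltO (x y : option W) : Prop :=
  match x, y with
  | Some a, Some b => lt a b
  | Some _, None => True
  | None, _ => False
  end.

Definition is_succ (i : W) (x : option W) : Prop :=
  ltO (Some i) x /\ forall y, ltO (Some i) y -> x = y \/ ltO x y.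

Definition is_limit (x : option W) : Prop :=
  (exists y, ltO y x) /\ (forall y, ltO y x -> exists2 z, ltO y z & ltO z x).

Definition is_liminf (c : W -> pterm) (x : option W) (u : pterm) : Prop :=
  exists g : W -> pterm,
    (forall b, ltO (Some b) x ->
       is_glb (fun v => exists i, [/\ b = i \/ lt b i, ltO (Some i) x & v = c i])
              (g b))
    /\ is_lub (fun v => exists2 b, ltO (Some b) x & v = g b) u.

Definition strongly_p_converging (R : trs) (T : option W -> pterm)
    (P : W -> seq nat) (s t : pterm) : Prop :=
  let c := fun i => replace (T (Some i)) (P i) bot_term in
  [/\ forall x, wf_term (T x),
      (forall x, (forall y, ~ ltO y x) -> T x = s),
      (forall i x, is_succ i x -> step R (T (Some i)) (P i) (T x)),
      (forall x, is_limit x -> is_liminf c x (T x))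
    & T None = t].
End Reduction.

Definition sp_reachable (R : trs) (s t : pterm) : Prop :=
  exists (W : Type) (lt : W -> W -> Prop) (T : option W -> pterm)
         (P : W -> seq nat),
    well_order lt /\ strongly_p_converging lt R T P s t.

End Terms.

From mathcomp Require Import all_boot zify.
From Stdlib Require Import Classical ClassicalEpsilon FunctionalExtensionality Wf_nat.
Set Implicit Arguments. Unset Strict Implicit. Unset Printing Implicit Defensive.

(* Reduce t fairly: at step k contract the redex at the k-th position of a
   schedule that lists every position infinitely often, if there is a redex
   there, and any redex otherwise.  If a normal form is reached, the finite
   reduction is the witness.  Otherwise the reduction has length omega and,
   in the partial-order model, strongly p-converges to the liminf U of its
   contexts.  U is normal: if U had a redex at pi with left-hand side l, then,
   l being finite, all function symbols of l would be present at pi in every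
   context from some step N on.  By left-linearity the term then has a redex
   at pi at every later step, so the fair schedule contracts it at some step
   m >= N, and the context of step m has bot at pi, where l has its root
   symbol. *)

Definition asbool (P : Prop) : bool := is_left (excluded_middle_informative P).

Lemma asboolP (P : Prop) : reflect P (asbool P).
Proof. by rewrite /asbool; case: excluded_middle_informative => /= p; constructor. Qed.

Lemma ex_bound_forall_ltn k (P : nat -> nat -> Prop) :
  (forall i n n', n <= n' -> P i n -> P i n') ->
  (forall i, i < k -> exists n, P i n) -> exists n, forall i, i < k -> P i n.
Proof.
move=> P_mono; elim: k => [|k IHk] P_ex; first by exists 0.
have [n1 P1] := IHk (fun i lt_ik => P_ex i (ltnW lt_ik)).
have [n2 P2] := P_ex k (ltnSn k).
exists (maxn n1 n2) => i; rewrite ltnS leq_eqVlt => /orP [/eqP ->|lt_ik].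
  by apply: P_mono P2; rewrite leq_maxr.
by apply: P_mono (P1 i lt_ik); rewrite leq_maxl.
Qed.

Lemma ex_minimal (P : nat -> Prop) : (exists n, P n) ->
  exists n, P n /\ forall k, k < n -> ~ P k.
Proof.
case=> n; elim/ltn_ind: n => n IHn Pn.
have [[k [lt_kn Pk]]|no_smaller] := classic (exists k, k < n /\ P k); first exact: IHn Pk.
by exists n; split => // k lt_kn Pk; apply: no_smaller; exists k.
Qed.

Lemma well_order_ltn : well_order (fun a b : nat => a < b).
Proof.
split; first by apply: (well_founded_lt_compat _ id) => a b /ltP.
  by move=> a b c lt_ab; apply: ltn_trans.
by move=> a b; case: ltngtP; auto.
Qed.

Lemma ltn_initial x : (forall y, ~ ltO (fun a b : nat => a < b) y x) -> x = Some 0.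
Proof.
case: x => [[|i]|] no_pred //; exfalso.
  by apply: (no_pred (Some i)) => /=.
by apply: (no_pred (Some 0)).
Qed.

Lemma ltn_succ i x : is_succ (fun a b : nat => a < b) i x -> x = Some i.+1.
Proof.
case: x => [j|] [/= lt_ij next]; last by case: (next (Some i.+1) (ltnSn i)).
by case: (next (Some i.+1) (ltnSn i)) => [-> //|/= lt_ji]; lia.
Qed.

Lemma ltn_limit x : is_limit (fun a b : nat => a < b) x -> x = None.
Proof.
case: x => [j|] // [[[k|] //= lt_kj] dense]; have lt_pj : j.-1 < j by lia.
by have [[z|] //= lt_z z_lt] := dense (Some j.-1) lt_pj; lia.
Qed.

Definition ord_pos n (x : option 'I_n) : nat := if x is Some i then val i else n.

Lemma well_order_ord n : well_order (fun a b : 'I_n => a < b).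
Proof.
split; first by apply: (well_founded_lt_compat _ val) => a b /ltP.
  by move=> a b c lt_ab; apply: ltn_trans.
by move=> a b; case: ltngtP => [||/val_inj]; auto.
Qed.

Lemma ord_initial n (x : option 'I_n) :
  (forall y, ~ ltO (fun a b : 'I_n => a < b) y x) -> ord_pos x = 0.
Proof.
case: x => [[[|i] lt_i]|] no_pred //=.
  by exfalso; apply: (no_pred (Some (Ordinal (ltnW lt_i)))) => /=.
by case: n no_pred => [//|n] no_pred; exfalso; apply: (no_pred (Some ord0)).
Qed.

Lemma ord_succ n (i : 'I_n) x : is_succ (fun a b : 'I_n => a < b) i x -> ord_pos x = i.+1.
Proof.
case: x => [j|] [/= lt_ij next].
  case: (ltnP i.+1 j) => [lt_ij'|]; last by lia.
  have lt_in : i.+1 < n by have := ltn_ord j; lia.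
  by case: (next (Some (Ordinal lt_in)) (ltnSn i)) => [[/(congr1 val)]|] /=; lia.
case: (ltnP i.+1 n) => [lt_in|]; last by have := ltn_ord i; lia.
by case: (next (Some (Ordinal lt_in)) (ltnSn i)).
Qed.

Lemma ord_not_limit n (x : option 'I_n) : ~ is_limit (fun a b : 'I_n => a < b) x.
Proof.
case: x => [j|] [[[k|] //= lt_k] dense].
  have lt_pj : j.-1 < n by have := ltn_ord j; lia.
  have [[z|] //= lt_z z_lt] := dense (Some (Ordinal lt_pj)) ltac:(rewrite /=; lia).
  lia.
have lt_pn : n.-1 < n by have := ltn_ord k; lia.
have [[z|] //= lt_z _] := dense (Some (Ordinal lt_pn)) I.
by have := ltn_ord z; lia.
Qed.

Section PartialTerms.
Variables (F V : Type) (arity : F -> nat).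
Local Notation pterm := (pterm F V).
Local Notation wf := (@wf_term F V arity).
Local Notation Fn f := (@Fun F V f).
Local Notation Vr x := (@Var F V x).
Local Notation Bt := (Bot F V).
Local Notation bot := (bot_term F V).

Lemma wf_prefix t p q : wf t -> t (p ++ q) <> None -> t p <> None.
Proof.
move=> [_ wf_parent _]; elim/last_ind: q => [|q i IHq]; first by rewrite cats0.
by rewrite -rcons_cat => /wf_parent [f tf _]; apply: IHq; rewrite tf.
Qed.

Lemma wf_parent t p i q : wf t -> t (rcons p i ++ q) <> None ->
  exists2 f, t p = Some (Fn f) & i < arity f.
Proof. by move=> wf_t /(wf_prefix wf_t); case: wf_t => _ wf_parent _; apply: wf_parent. Qed.

Lemma wf_take t p k : wf t -> t p <> None -> k < size p ->
  exists f, t (take k p) = Some (Fn f).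
Proof.
move=> wf_t tp lt_k; rewrite -(cat_take_drop k.+1 p) (take_nth 0 lt_k) in tp.
by have [f tf _] := wf_parent wf_t tp; exists f.
Qed.

Lemma wf_subterm t p : wf t -> t p <> None -> wf (subterm t p).
Proof.
move=> [_ t_parent t_child] tp; split; rewrite /subterm ?cats0 //.
- by move=> q i; rewrite -rcons_cat; apply: t_parent.
- by move=> q f i tf lt_i; rewrite -rcons_cat; apply: t_child tf lt_i.
Qed.

Lemma prefix_rconsE (T : eqType) (s p : seq T) i :
  prefix s (rcons p i) = prefix s p || (s == rcons p i).
Proof.
apply/idP/orP => [/prefixP [s']|[/prefixP [s' ->]|/eqP ->]]; last first.
- exact: prefix_refl.
- by rewrite rcons_cat prefix_prefix.
case/lastP: s' => [|s' j]; first by rewrite cats0 => ->; right.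
rewrite -rcons_cat => /eqP; rewrite eqseq_rcons => /andP [/eqP -> _].
by left; rewrite prefix_prefix.
Qed.

Lemma wf_replace t pi s : wf t -> t pi <> None -> wf s -> wf (replace t pi s).
Proof.
move=> [t_root t_parent t_child] tpi [s_root s_parent s_child]; split; rewrite /replace.
- by case: pi tpi => [|j pi] /= tpi.
- move=> p i; rewrite prefix_rconsE; case pi_p: (prefix pi p) => /=.
    case/prefixP: pi_p => q ->; rewrite rcons_cat !drop_size_cat //.
    exact: s_parent.
  case: eqP => [pi_eq _|_ /t_parent //].
  by apply: t_parent; rewrite -pi_eq.
- move=> p f i; case pi_p: (prefix pi p) => /=.
    case/prefixP: pi_p => q ->; rewrite drop_size_cat // => sf lt_i.
    by rewrite rcons_cat prefix_prefix drop_size_cat //; apply: s_child sf lt_i.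
  move=> tf lt_i; rewrite prefix_rconsE pi_p /=; case: eqP => [->|_].
    by rewrite drop_size.
  exact: t_child tf lt_i.
Qed.

Lemma wf_bot : wf bot.
Proof. by split => //; case. Qed.

Lemma replace_bot_at t pi : replace t pi bot pi = Some Bt.
Proof. by rewrite /replace prefix_refl drop_size. Qed.

Lemma replace_bot_Fun t pi p f :
  replace t pi bot p = Some (Fn f) -> t p = Some (Fn f).
Proof. by rewrite /replace; case: prefix => //; case: (drop _ p). Qed.

Section Substitution.
Variables (sigma : V -> pterm) (r : pterm).
Hypotheses (wf_sigma : wf_subst arity sigma) (wf_r : wf r).

Lemma subst_aux_parent p q i : subst_aux sigma r q (rcons p i) <> None ->
  exists2 f, subst_aux sigma r q p = Some (Fn f) & i < arity f.
Proof.
case: wf_r => _ r_parent _; elim: p q => [|j p IHp] q /=; last first.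
  case: (r q) => [[f|x|]|] //=; try exact: IHp.
  by case: (wf_sigma x) => _ sx_parent _; apply: (sx_parent (j :: p)).
case rq: (r q) => [[f|x|]|] /=.
2: by case: (wf_sigma x) => _ sx_parent _; apply: (sx_parent [::]).
all: move=> sub_i; have /r_parent [g rg lt_i] : r (rcons q i) <> None.
all: try by move=> ri; apply: sub_i; rewrite ri.
all: rewrite rq in rg; try congruence.
by case: rg => ->; exists g.
Qed.

Lemma subst_aux_child p q f i : subst_aux sigma r q p = Some (Fn f) -> i < arity f ->
  subst_aux sigma r q (rcons p i) <> None.
Proof.
case: wf_r => _ _ r_child; elim: p q => [|j p IHp] q /=.
  case rq: (r q) => [[g|x|]|] //=.
    case=> <- lt_i; have := r_child _ _ _ rq lt_i.
    by case: (r (rcons q i)) => [[g'|y|]|] //= _; case: (wf_sigma y).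
  by case: (wf_sigma x) => _ _ sx_child sf lt_i; apply: (sx_child [::] f i).
case: (r q) => [[g|x|]|] /=; try exact: IHp.
by case: (wf_sigma x) => _ _ sx_child sf lt_i; apply: (sx_child (j :: p) f i).
Qed.

Lemma subst_root_def : subst sigma r [::] <> None.
Proof.
case: wf_r => r_root _ _; rewrite /subst /=.
by case: (r [::]) r_root => [[f|x|]|] //= _; case: (wf_sigma x).
Qed.

Lemma wf_subst_term : wf (subst sigma r).
Proof.
split; first exact: subst_root_def.
- by move=> p i; apply: subst_aux_parent.
- by move=> p f i; apply: subst_aux_child.
Qed.

Lemma subst_aux_None p q : r q = None -> subst_aux sigma r q p = None.
Proof.
elim: p q => [|i p IHp] q rq /=; rewrite rq //; apply: IHp.
case ri: (r (rcons q i)) => [a|] //.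
have [f] : exists2 f, r q = Some (Fn f) & i < arity f.
  by apply: (wf_parent (q := [::]) wf_r); rewrite cats0 ri.
by rewrite rq.
Qed.

Lemma subst_aux_Fun p q f : r (q ++ p) = Some (Fn f) -> subst_aux sigma r q p = Some (Fn f).
Proof.
elim: p q => [|i p IHp] q /=; first by rewrite cats0 => ->.
rewrite -cat_rcons => rf; have [g -> _] : exists2 g, r q = Some (Fn g) & i < arity g.
  by apply: (wf_parent (q := p) wf_r); rewrite rf.
exact: IHp.
Qed.

End Substitution.

Section TailGlb.
Variable c : nat -> pterm.
Hypothesis wf_c : forall m, wf (c m).

Definition stable_from n p a := forall m, n <= m -> c m p = Some a.

Definition spine_stable n p :=
  forall k, k < size p -> exists f, stable_from n (take k p) (Fn f).

Definition tail_label n p : label F V := epsilon (inhabits Bt) (stable_from n p).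

Definition tail_glb n : pterm := fun p =>
  if asbool (spine_stable n p /\ c n p <> None) then
    if asbool (exists a, stable_from n p a)
    then Some (tail_label n p) else Some Bt
  else None.

Lemma tail_labelE n p a : stable_from n p a -> tail_label n p = a.
Proof.
move=> stable_a; have : stable_from n p (tail_label n p) by apply: epsilon_spec; exists a.
by move/(_ n (leqnn n)); rewrite (stable_a n (leqnn n)) => -[->].
Qed.

Lemma tail_glb_stable n p a : spine_stable n p -> stable_from n p a -> tail_glb n p = Some a.
Proof.
move=> spine stable_a; rewrite /tail_glb /=.
case: asboolP => [_|]; last by case; rewrite (stable_a n (leqnn n)).
case: asboolP => [_|]; last by case; exists a.
by rewrite (tail_labelE stable_a).
Qed.

Lemma tail_glb_Some n p a : tail_glb n p = Some a ->
  [/\ spine_stable n p, c n p <> None & a = Bt \/ stable_from n p a].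
Proof.
rewrite /tail_glb /=; case: asboolP => // -[spine cnp].
case: asboolP => [[b stable_b]|_] [<-]; last by split => //; left.
by split => //; right; rewrite (tail_labelE stable_b).
Qed.

Lemma spine_stable_rcons n p i : spine_stable n (rcons p i) <->
  spine_stable n p /\ exists f, stable_from n p (Fn f).
Proof.
rewrite /spine_stable size_rcons -cats1.
have take_p k : k <= size p -> take k (p ++ [:: i]) = take k p by apply: takel_cat.
split => [spine|[spine [f stable_f]] k].
  split => [k lt_k|]; last by have := spine (size p) (ltnSn _); rewrite take_p ?take_size.
  by rewrite -take_p ?(ltnW lt_k) //; apply: spine; rewrite ltnS ltnW.
rewrite ltnS leq_eqVlt => /orP [/eqP ->|lt_k]; first by rewrite take_p ?take_size //; exists f.
by rewrite take_p ?(ltnW lt_k) //; apply: spine.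
Qed.

Lemma tail_glb_defined n p : spine_stable n p -> c n p <> None -> tail_glb n p <> None.
Proof.
move=> spine cnp; rewrite /tail_glb /=.
by case: asboolP => [_|/(_ (conj spine cnp)) //]; case: asboolP.
Qed.

Lemma tail_glb_le n m : n <= m -> le_bot (tail_glb n) (c m).
Proof.
move=> le_nm p; case gp: (tail_glb n p) => [a|] // _.
by have [_ _ [->|stable_a]] := tail_glb_Some gp; [left | right; rewrite stable_a].
Qed.

Lemma wf_tail_glb n : wf (tail_glb n).
Proof.
have [cn_root cn_parent cn_child] := wf_c n; split.
- exact: tail_glb_defined.
- move=> p i; case gpi: (tail_glb n (rcons p i)) => [a|] // _.
  have [/spine_stable_rcons [spine [f stable_f]] cnpi _] := tail_glb_Some gpi.
  have [g] := cn_parent p i cnpi; rewrite (stable_f n (leqnn n)) => -[<-] lt_i.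
  by exists f => //; apply: tail_glb_stable.
- move=> p f i gf lt_i; have [spine _ [//|stable_f]] := tail_glb_Some gf.
  apply: tail_glb_defined; first by apply/spine_stable_rcons; split => //; exists f.
  exact: cn_child (stable_f n (leqnn n)) lt_i.
Qed.

Lemma tail_glb_greatest n h : wf h -> (forall m, n <= m -> le_bot h (c m)) ->
  le_bot h (tail_glb n).
Proof.
move=> wf_h h_le p hp; case hpa: (h p) => [a|]; last by rewrite hpa in hp.
have [->|a_nBt] := classic (a = Bt); [by left | right].
have h_stable q b : h q = Some b -> b <> Bt -> stable_from n q b.
  move=> hqb b_nBt m le_nm; have := h_le m le_nm q; rewrite hqb.
  by case=> // -[] // /b_nBt.
have spine : spine_stable n p.
  move=> k lt_k; have [f hf] := wf_take wf_h hp lt_k.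
  by exists f; apply: h_stable hf _.
by rewrite (tail_glb_stable spine (h_stable _ _ hpa a_nBt)).
Qed.

Lemma tail_glb_mono n n' : n <= n' -> le_bot (tail_glb n) (tail_glb n').
Proof.
move=> le_nn'; apply: tail_glb_greatest; first exact: wf_tail_glb.
by move=> m le_n'm; apply: tail_glb_le; apply: leq_trans le_n'm.
Qed.

End TailGlb.

Section ChainLub.
Variable g : nat -> pterm.
Hypotheses (wf_g : forall n, wf (g n))
           (g_mono : forall n n', n <= n' -> le_bot (g n) (g n')).

Definition proper_value p a := a <> Bt /\ exists n, g n p = Some a.

Definition chain_lub : pterm := fun p =>
  if asbool (exists a, proper_value p a)
  then Some (epsilon (inhabits Bt) (proper_value p))
  else if asbool (exists n, g n p <> None) then Some Bt else None.

Lemma chain_agree n n' p a a' : g n p = Some a -> a <> Bt ->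
  g n' p = Some a' -> a' <> Bt -> a = a'.
Proof.
wlog le_nn' : n n' a a' / n <= n' => [wlog_le|gna a_nBt gna' a'_nBt].
  by case: (leqP n n') => [|/ltnW] le gna a_nBt gna' a'_nBt; [|symmetry];
    apply: wlog_le le _ _ _ _.
have := g_mono le_nn' (p := p); rewrite gna gna' => /(_ ltac:(done)).
by case=> -[] // /a_nBt.
Qed.

Lemma chain_lub_proper n p a : g n p = Some a -> a <> Bt -> chain_lub p = Some a.
Proof.
move=> gna a_nBt; have ex : exists b, proper_value p b by exists a; split => //; exists n.
rewrite /chain_lub /=; case: asboolP => // _.
have [b_nBt [m gmb]] := epsilon_spec (inhabits Bt) _ ex.
by congr Some; apply: chain_agree gmb b_nBt gna a_nBt.
Qed.

Lemma chain_lub_attained p a : chain_lub p = Some a -> a <> Bt -> exists n, g n p = Some a.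
Proof.
rewrite /chain_lub /=; case: asboolP => [ex [<-] _|_].
  by have [_ [n gn]] := epsilon_spec (inhabits Bt) _ ex; exists n.
by case: asboolP => // _ [<-].
Qed.

Lemma chain_lub_defined p : chain_lub p <> None <-> exists n, g n p <> None.
Proof.
rewrite /chain_lub /=; case: asboolP => [[a [_ [n gna]]]|no_proper].
  by split=> // _; exists n; rewrite gna.
by case: asboolP.
Qed.

Lemma wf_chain_lub : wf chain_lub.
Proof.
split.
- by apply/chain_lub_defined; exists 0; case: (wf_g 0).
- move=> p i /chain_lub_defined [n gpi]; case: (wf_g n) => _ gn_parent _.
  by have [f gf lt_i] := gn_parent p i gpi; exists f => //; apply: chain_lub_proper gf _.
- move=> p f i lub_f lt_i.
  have [n gf] : exists n, g n p = Some (Fn f) by apply: chain_lub_attained lub_f _.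
  apply/chain_lub_defined; exists n; case: (wf_g n) => _ _ gn_child.
  exact: gn_child gf lt_i.
Qed.

Lemma chain_lub_ub n : le_bot (g n) chain_lub.
Proof.
move=> p gp; case gpa: (g n p) gp => [a|] // _.
have [->|a_nBt] := classic (a = Bt); [by left | by right; rewrite (chain_lub_proper gpa)].
Qed.

Lemma chain_lub_least h : (forall n, le_bot (g n) h) -> le_bot chain_lub h.
Proof.
move=> le_h p lub_p; case lub_pa: (chain_lub p) lub_p => [a|] // _.
have [->|a_nBt] := classic (a = Bt); [by left | right].
have [n gna] := chain_lub_attained lub_pa a_nBt.
by have := le_h n p; rewrite gna => /(_ ltac:(done)) [[/a_nBt]|].
Qed.

End ChainLub.

Lemma finite_term_eventually (l : pterm) (P : seq nat -> nat -> Prop) :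
  wf l -> finite_term l -> (forall q n n', n <= n' -> P q n -> P q n') ->
  (forall q, l q <> None -> exists n, P q n) ->
  exists n, forall q, l q <> None -> P q n.
Proof.
move=> wf_l [D deep_None] P_mono P_ex.
suff bound d q0 : D < size q0 + d ->
    exists n, forall q, l (q0 ++ q) <> None -> P (q0 ++ q) n.
  by have [n Pn] := bound D.+1 [::] (ltnSn D); exists n.
elim: d q0 => [|d IHd] q0 deep.
  by exists 0 => q; rewrite deep_None // size_cat; lia.
case lq0: (l q0) => [a|]; last first.
  by exists 0 => q /(wf_prefix wf_l); rewrite lq0.
have [n0 P0] := P_ex q0 ltac:(by rewrite lq0).
pose k := if a is Fun f then arity f else 0.
have [n1 P1] : exists n, forall i, i < k ->
    forall q, l (rcons q0 i ++ q) <> None -> P (rcons q0 i ++ q) n.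
  apply: ex_bound_forall_ltn => [i n n' le_nn' Pn q lq|i _].
    exact: P_mono le_nn' (Pn q lq).
  by apply: IHd; rewrite size_rcons addSnnS.
exists (maxn n0 n1) => -[|i q]; first by rewrite cats0 => _; apply: P_mono P0; rewrite leq_maxl.
rewrite -cat_rcons => lq; have [f lf lt_i] := wf_parent wf_l lq.
apply: P_mono (P1 i _ q lq); first by rewrite leq_maxr.
by move: lf; rewrite lq0 /k => -[->].
Qed.

Definition liminf_seq (c : nat -> pterm) : pterm := chain_lub (tail_glb c).

Section LiminfSeq.
Variable c : nat -> pterm.
Hypothesis wf_c : forall m, wf (c m).

Lemma wf_liminf_seq : wf (liminf_seq c).
Proof. by apply: wf_chain_lub; [exact: wf_tail_glb wf_c | exact: tail_glb_mono wf_c]. Qed.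

Lemma liminf_seqP : is_liminf arity (fun a b : nat => a < b) c None (liminf_seq c).
Proof.
have g_mono := tail_glb_mono wf_c.
exists (tail_glb c); split.
  move=> n _; split; first exact: wf_tail_glb.
    by move=> v [m [le_nm _ ->]]; apply: tail_glb_le; case: le_nm => [->|/ltnW].
  move=> h wf_h h_le; apply: tail_glb_greatest => // m le_nm.
  apply: h_le; exists m; split => //.
  by move: le_nm; rewrite leq_eqVlt => /orP [/eqP|]; [left|right].
split; first exact: wf_liminf_seq.
  by move=> v [n _ ->]; exact: chain_lub_ub g_mono n.
by move=> h wf_h h_ub; apply: chain_lub_least => n; apply: h_ub; exists n.
Qed.

Lemma liminf_seq_stable p a : liminf_seq c p = Some a -> a <> Bt ->
  exists n, forall m, n <= m -> c m p = Some a.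
Proof.
move=> lim_a a_nBt; have [n gna] := chain_lub_attained lim_a a_nBt.
by have [_ _ [/a_nBt|stable_a]] := tail_glb_Some gna; last exists n.
Qed.

Lemma liminf_seq_stable_funs (l : pterm) pi : wf l -> finite_term l ->
  (forall q f, l q = Some (Fn f) -> liminf_seq c (pi ++ q) = Some (Fn f)) ->
  exists N, forall m, N <= m -> forall q f, l q = Some (Fn f) -> c m (pi ++ q) = Some (Fn f).
Proof.
move=> wf_l l_finite lim_funs.
have [N stable] : exists N, forall q, l q <> None -> forall m, N <= m ->
    forall f, l q = Some (Fn f) -> c m (pi ++ q) = Some (Fn f).
  apply: finite_term_eventually => // [q n n' le_nn' Pn m le_n'm|q _].
    exact: Pn m (leq_trans le_nn' le_n'm).
  case lq: (l q) => [[f||]|]; try by exists 0 => m _ f' lf'; congruence.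
  have [n stable_f] : exists n, forall m, n <= m -> c m (pi ++ q) = Some (Fn f).
    by apply: liminf_seq_stable (lim_funs q f lq) _.
  by exists n => m le_nm f' [<-]; apply: stable_f.
by exists N => m le_Nm q f lf; apply: stable => //; rewrite lf.
Qed.

End LiminfSeq.

Section Rewriting.
Variable R : trs F V.
Hypothesis HR : is_TRS arity R.

Lemma step_pos t pi t' : step arity R t pi t' -> t pi <> None.
Proof.
case=> l [r [sigma [Rlr wf_sigma t_pi _]]]; have [[wf_l _] _ _ _ _] := HR Rlr.
have := congr1 (fun u => u [::]) t_pi; rewrite /subterm cats0 => ->.
exact: subst_root_def.
Qed.

Lemma wf_step t pi t' : wf t -> step arity R t pi t' -> wf t'.
Proof.
move=> wf_t st; have tpi := step_pos st.
case: st => l [r [sigma [Rlr wf_sigma _ ->]]]; have [[_ wf_r] _ _ _ _] := HR Rlr.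
by apply: wf_replace => //; apply: wf_subst_term.
Qed.

Lemma wf_step_context t pi t' : wf t -> step arity R t pi t' -> wf (replace t pi bot).
Proof. by move=> wf_t /step_pos tpi; apply: wf_replace wf_t tpi wf_bot. Qed.

Lemma wf_steps (T : nat -> pterm) (P : nat -> seq nat) n : wf (T 0) ->
  (forall k, k < n -> step arity R (T k) (P k) (T k.+1)) -> forall k, k <= n -> wf (T k).
Proof.
move=> wf_T0 steps; elim=> [//|k IHk] lt_kn.
exact: wf_step (IHk (ltnW lt_kn)) (steps k lt_kn).
Qed.

Lemma sp_reachable_wf s t : sp_reachable arity R s t -> wf t.
Proof. by case=> W [lt [T [P [_ [wf_T _ _ _ <-]]]]]. Qed.

Lemma sp_reachable_finite (T : nat -> pterm) (P : nat -> seq nat) n : wf (T 0) ->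
  (forall k, k < n -> step arity R (T k) (P k) (T k.+1)) -> sp_reachable arity R (T 0) (T n).
Proof.
move=> wf_T0 steps; have wf_T := wf_steps wf_T0 steps.
exists 'I_n, (fun a b : 'I_n => a < b), (fun x => T (ord_pos x)), (fun i => P i).
split; first exact: well_order_ord.
split => //.
- by case=> [i|] /=; apply: wf_T => //; apply: ltnW.
- by move=> x /ord_initial ->.
- by move=> i x /ord_succ ->; apply: steps (ltn_ord i).
- by move=> x /ord_not_limit.
Qed.

Lemma sp_reachable_omega (T : nat -> pterm) (P : nat -> seq nat) : wf (T 0) ->
  (forall k, step arity R (T k) (P k) (T k.+1)) ->
  sp_reachable arity R (T 0) (liminf_seq (fun k => replace (T k) (P k) bot)).
Proof.
move=> wf_T0 steps.
have wf_T k : wf (T k) by apply: (wf_steps (n := k)) => // j _; apply: steps.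
have wf_c k : wf (replace (T k) (P k) bot) by apply: wf_step_context (wf_T k) (steps k).
exists nat, (fun a b : nat => a < b),
  (fun x => if x is Some k then T k else liminf_seq (fun k => replace (T k) (P k) bot)), P.
split; first exact: well_order_ltn.
split => //.
- by case=> [k|] /=; [apply: wf_T | apply: wf_liminf_seq].
- by move=> x /ltn_initial ->.
- by move=> i x /ltn_succ ->; apply: steps.
- by move=> x /ltn_limit ->; apply: liminf_seqP.
Qed.

Definition redex t pi := exists l r sigma,
  [/\ R l r, wf_subst arity sigma & subterm t pi = subst sigma l].

Definition contract t pi : pterm := epsilon (inhabits t) (step arity R t pi).

Lemma contract_step t pi : redex t pi -> step arity R t pi (contract t pi).
Proof.
case=> l [r [sigma [Rlr wf_sigma t_pi]]]; apply: epsilon_spec.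
by exists (replace t pi (subst sigma r)), l, r, sigma.
Qed.

Definition pick_redex t q : seq nat :=
  epsilon (inhabits q) (fun pi => redex t pi /\ (redex t q -> pi = q)).

Lemma pick_redexP t q : (exists pi, redex t pi) ->
  redex t (pick_redex t q) /\ (redex t q -> pick_redex t q = q).
Proof.
case=> pi t_pi.
apply: (epsilon_spec (inhabits q) (fun p => redex t p /\ (redex t q -> p = q))).
by have [t_q|t_nq] := classic (redex t q); [exists q | exists pi].
Qed.

Section LeftLinearMatching.
Hypothesis R_linear : left_linear R.
Variables (t : pterm) (pi : seq nat) (l r : pterm).
Hypotheses (wf_t : wf t) (Rlr : R l r)
  (t_funs : forall q f, l q = Some (Fn f) -> t (pi ++ q) = Some (Fn f)).

(* Variables not occurring in l are sent to bot only to keep the substitution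
   well-formed. *)
Definition matcher (x : V) : pterm :=
  if asbool (exists p, l p = Some (Vr x))
  then subterm t (pi ++ epsilon (inhabits [::]) (fun p => l p = Some (Vr x)))
  else bot.

Lemma matcherE p x : l p = Some (Vr x) -> matcher x = subterm t (pi ++ p).
Proof.
move=> lx; rewrite /matcher; case: asboolP => [ex|]; last by case; exists p.
by rewrite (R_linear Rlr (epsilon_spec (inhabits [::]) _ ex) lx).
Qed.

Lemma wf_matcher : wf_subst arity matcher.
Proof.
have [[wf_l _] _ _ l_root _] := HR Rlr; case: wf_t => _ _ t_child.
move=> x; rewrite /matcher; case: asboolP => [ex|_]; last exact: wf_bot.
move: (epsilon_spec (inhabits [::]) _ ex); move: (epsilon _ _) => p lx.
apply: wf_subterm wf_t _; case/lastP: p lx => [|q i] lx; first by case: (l_root x).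
have [f lf lt_i] := wf_parent (p := q) (i := i) (q := [::]) wf_l ltac:(by rewrite cats0 lx).
by have := t_child _ _ _ (t_funs lf) lt_i; rewrite rcons_cat.
Qed.

Lemma subst_matcher : subst matcher l = subterm t pi.
Proof.
have [[wf_l _] l_total _ _ _] := HR Rlr; have [_ _ l_child] := wf_l.
suff agree p q : l q <> None -> subst_aux matcher l q p = t (pi ++ q ++ p).
  by apply: functional_extensionality => p; apply: agree; case: wf_l.
elim: p q => [|i p IHp] q lq /=.
  case lqa: (l q) lq => [[f|x|]|] // _; rewrite cats0.
  - by rewrite (t_funs lqa).
  - by rewrite (matcherE lqa) /subterm cats0.
  - by case: (l_total q).
case lqa: (l q) lq => [[f|x|]|] // _; last by case: (l_total q).
  case lqi: (l (rcons q i)) => [a|]; first by rewrite IHp ?lqi // cat_rcons.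
  rewrite subst_aux_None //; case tqi: (t (pi ++ q ++ i :: p)) => [b|] //.
  have [g] : exists2 g, t (pi ++ q) = Some (Fn g) & i < arity g.
    by apply: (wf_parent (q := p) wf_t); rewrite cat_rcons -catA tqi.
  by rewrite (t_funs lqa) => -[<-] /(l_child _ _ _ lqa); rewrite lqi.
by rewrite (matcherE lqa) /subterm catA.
Qed.

Lemma redex_of_funs : redex t pi.
Proof. by exists l, r, matcher; split; [| exact: wf_matcher | rewrite subst_matcher]. Qed.

End LeftLinearMatching.

(* Writing k + 1 = 2 ^ j * odd, step k is devoted to the position coded by j,
   so every position is scheduled infinitely often. *)
Definition schedule (k : nat) : seq nat := odflt [::] (unpickle (logn 2 k.+1)).

Lemma schedule_fair pi n : exists2 m, n <= m & schedule m = pi.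
Proof.
pose j := pickle pi; have pos_2j : 0 < 2 ^ j by rewrite expn_gt0.
exists (2 ^ j * n.*2.+1).-1; first nia.
rewrite /schedule prednK ?muln_gt0 ?pos_2j // lognM // pfactorK //.
by rewrite logn_coprime ?addn0 ?pickleK // coprime2n /= odd_double.
Qed.

Fixpoint fair_reduct (t : pterm) (k : nat) : pterm :=
  if k is k'.+1 then
    let u := fair_reduct t k' in contract u (pick_redex u (schedule k'))
  else t.

Definition fair_pos t k : seq nat := pick_redex (fair_reduct t k) (schedule k).

Lemma fair_reduct_step t k : (exists pi, redex (fair_reduct t k) pi) ->
  step arity R (fair_reduct t k) (fair_pos t k) (fair_reduct t k.+1).
Proof. by move=> /(pick_redexP (schedule k)) [t_redex _]; apply: contract_step. Qed.

Definition fair_limit t : pterm :=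
  liminf_seq (fun k => replace (fair_reduct t k) (fair_pos t k) bot).

Lemma fair_limit_normal t : left_linear R -> left_finite R -> wf t ->
  (forall k, exists pi, redex (fair_reduct t k) pi) -> normal_form arity R (fair_limit t).
Proof.
move=> R_linear R_finite wf_t redexes.
have steps k := fair_reduct_step (redexes k).
have wf_T k : wf (fair_reduct t k) by apply: (wf_steps (n := k)) => // j _; apply: steps.
move=> [pi [l [r [sigma [Rlr wf_sigma lim_pi]]]]].
have [[wf_l _] l_total _ l_root _] := HR Rlr.
have lim_funs q f : l q = Some (Fn f) -> fair_limit t (pi ++ q) = Some (Fn f).
  by move=> lf; have := congr1 (fun u => u q) lim_pi; rewrite /subterm => ->; apply: subst_aux_Fun.
have [N stable] := liminf_seq_stable_funs wf_l (R_finite _ _ Rlr) lim_funs.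
have [m le_Nm sched_m] := schedule_fair pi N.
have m_redex : redex (fair_reduct t m) pi.
  apply: (redex_of_funs R_linear (wf_T m) Rlr) => q f lf.
  exact: replace_bot_Fun (stable m le_Nm q f lf).
have pos_m : fair_pos t m = pi.
  by have [_ pick_pi] := pick_redexP pi (redexes m); rewrite /fair_pos sched_m pick_pi.
case l_at_root: (l [::]) => [[f|x|]|]; last by case: wf_l.
- have := stable m le_Nm [::] f l_at_root.
  by rewrite cats0 pos_m replace_bot_at.
- by case: (l_root x).
- by case: (l_total [::]).
Qed.

End Rewriting.
End PartialTerms.

Theorem theorem6p14 (F V : Type) (arity : F -> nat) (R : trs F V) :
  is_TRS arity R -> orthogonal arity R -> left_finite R ->
  forall t : pterm F V, wf_term arity t ->
  exists t' : pterm F V,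
    [/\ wf_term arity t', normal_form arity R t' & sp_reachable arity R t t'].
Proof.
move=> HR [R_linear _] R_finite t wf_t.
have [redexes|] := classic (forall k, exists pi, redex arity R (fair_reduct arity R t k) pi).
  have reach := sp_reachable_omega HR wf_t (fun k => fair_reduct_step (redexes k)).
  exists (fair_limit arity R t).
  by split; [exact: sp_reachable_wf reach | exact: fair_limit_normal | exact: reach].
move=> /not_all_ex_not /ex_minimal [n [normal_n before_n]].
have reach := sp_reachable_finite HR wf_t
  (fun k lt_kn => fair_reduct_step (NNPP _ (before_n k lt_kn))).
by exists (fair_reduct arity R t n); split; [exact: sp_reachable_wf reach | |].
Qed.
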